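(* Let $\ell\ge2$ and let $G$ be a graph such that every connected component of $\overline{G}$ is a pendant tree. If $c$ is the number of connected components of $\overline{G}$, then $G$ is $N$-AW if and only if $\gcd(2c-1,\ell)=1$.
   Context: All graphs are finite and simple; $\overline{G}$ is the complement. For a graph $H$, $H\odot K_1$ is obtained from $H$ by adding, for each vertex $u$ of $H$, a new vertex adjacent only to $u$; a pendant tree is a tree of this form. Labels lie in $\mathbb{Z}_\ell$. In the neighborhood Lights Out game, toggling a vertex $w$ adds $1$ (mod $\ell$) to the label of each vertex of the closed neighborhood $N[w]$; the game is won when all labels are $0$; a graph is $N$-AW if every initial labeling can be won. *)

From mathcomp Require Import all_boot all_order all_algebra.
Set Implicit Arguments. Unset Strict Implicit. Unset Printing Implicit Defensive.
Import GRing.Theory.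

Definition simple_graph (T : finType) (e : rel T) : Prop :=
  symmetric e /\ irreflexive e.

Definition compl_rel (T : finType) (e : rel T) : rel T :=
  fun x y => (x != y) && ~~ e x y.

Definition induced (T : finType) (g : rel T) (C : {set T}) : rel T :=
  fun x y => [&& x \in C, y \in C & g x y].

Definition components (T : finType) (g : rel T) : {set {set T}} :=
  [set [set y | connect g x y] | x : T].

(* the induced subgraph of g on C is a tree:
   nonempty, connected, and with exactly #|C| - 1 edges
   (ordered pairs counted, hence 2 * (#|C| - 1)). *)
Definition is_tree_on (T : finType) (g : rel T) (C : {set T}) : Prop :=
  [/\ 0 < #|C|,
      {in C &, forall x y, connect (induced g C) x y} &
      #|[set p : T * T | induced g C p.1 p.2]| = 2 * (#|C| - 1)].

(* the induced subgraph of g on C is isomorphic to H ⊙ K1 for some graph H: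
   H is the induced subgraph on S, and m u is the pendant vertex attached to u. *)
Definition is_corona_K1_on (T : finType) (g : rel T) (C : {set T}) : Prop :=
  exists (S : {set T}) (m : T -> T),
    [/\ S \subset C, {in S &, injective m}, C :\: S = m @: S &
        forall u x, u \in S -> x \in C -> g (m u) x = (x == u)].

Definition is_pendant_tree (T : finType) (g : rel T) (C : {set T}) : Prop :=
  is_tree_on g C /\ is_corona_K1_on g C.

Definition closed_nbhd (T : finType) (e : rel T) (w : T) : pred T :=
  fun v => (v == w) || e w v.

(* playing the sequence of toggles s from labeling f wins the game:
   each toggle of w adds 1 to each vertex of N[w]. *)
Definition wins (T : finType) (e : rel T) (l : nat) (f : T -> 'Z_l) (s : seq T) : Prop :=
  forall v : T, (f v + (count (fun w => closed_nbhd e w v) s)%:R = 0 :> 'Z_l)%R.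

Definition N_AW (T : finType) (e : rel T) (l : nat) : Prop :=
  forall f : T -> 'Z_l, exists s : seq T, @wins T e l f s.

From mathcomp Require Import all_boot all_order all_algebra.
From mathcomp Require Import ring zify.
Set Implicit Arguments. Unset Strict Implicit. Unset Printing Implicit Defensive.
Import GRing.Theory.

(* Let [H] be the complement of [G]. Toggling every vertex [w] a total of [x w] times
   adds [(J - A_H) x] to the labels, so [G] is N-AW over [Z_l] iff [J - A_H] is onto.
   Every component of [H] is some [B ⊙ K1]; the union [S] of the bases is a core for
   which [A_H] is invertible, solved leaf by leaf. The weight vector [w] with [A_H w = 1]
   pairs [(J - A_H) x] with [(Σ w - 1) Σ x], and [Σ w = 2c] because a pendant tree on
   [2k] vertices has [k - 1] edges inside its base. Hence [J - A_H] is onto iff [2c - 1]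
   is a unit of [Z_l]. *)

Local Open Scope ring_scope.

Lemma count_sum_mem (T : finType) (P : pred T) (s : seq T) :
  count P s = (\sum_(w | P w) count_mem w s)%N.
Proof.
elim: s => [|b s IH] /=; first by rewrite big1.
rewrite IH big_split /= -big_mkcondl; congr (_ + _)%N.
have [Pb | nPb] := boolP (P b).
- by rewrite (big_pred1 b) // => w /=; rewrite eq_sym; case: eqP => // ->.
- by rewrite big_pred0 // => w; case: eqP => // <-; rewrite (negbTE nPb).
Qed.

Lemma count_flatten_nseq (T : finType) (P : pred T) (n : T -> nat) :
  count P (flatten [seq nseq (n u) u | u <- enum T]) = (\sum_(u | P u) n u)%N.
Proof.
rewrite count_flatten -map_comp sumnE big_map big_enum [RHS]big_mkcond /=.
by apply: eq_bigr => u _; rewrite count_nseq /=; case: (P u); rewrite ?mul1n ?mul0n.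
Qed.

Lemma card_rel_pairs (T : finType) (P : rel T) :
  #|[set p : T * T | P p.1 p.2]| = (\sum_x #|[set y | P x y]|)%N.
Proof.
have deg x : #|[set y | P x y]| = (\sum_(y | P x y) 1)%N.
  by rewrite -sum1_card; apply: eq_bigl => y; rewrite inE.
under [RHS]eq_bigr do rewrite deg.
by rewrite pair_big_dep -sum1_card; apply: eq_bigl => p; rewrite inE.
Qed.

Definition lights_out_solvable (R : pzRingType) (T : finType) (e : rel T) : Prop :=
  forall f : T -> R, exists x : T -> R,
    forall v, f v + \sum_(w | closed_nbhd e w v) x w = 0.

Lemma N_AW_lights_out_solvable (T : finType) (e : rel T) (l : nat) :
  N_AW e l <-> lights_out_solvable 'Z_l e.
Proof.
split=> [win f | solve f].
- have [s wins_s] := win f.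
  exists (fun w => (count_mem w s)%:R) => v.
  by rewrite -natr_sum -count_sum_mem; apply: wins_s.
- have [x hx] := solve f.
  exists (flatten [seq nseq (x u : nat) u | u <- enum T]) => v.
  by rewrite count_flatten_nseq natr_sum; under eq_bigr do rewrite natr_Zp.
Qed.

Lemma sum_closed_nbhd (V : zmodType) (T : finType) (e : rel T) (x : T -> V) v :
  \sum_(w | closed_nbhd e w v) x w = \sum_w x w - \sum_(w | compl_rel e w v) x w.
Proof.
rewrite [\sum_w x w](bigID (fun w => compl_rel e w v)) /= addrAC subrr add0r.
by apply: eq_bigl => w; rewrite /closed_nbhd /compl_rel negb_and !negbK eq_sym.
Qed.

Lemma unitZp_natr_sub1 (l n : nat) : (1 < l)%N ->
  (n%:R - 1 : 'Z_l) \is a GRing.unit <-> gcdz (n%:Z - 1) l%:Z = 1%N.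
Proof.
move=> l_gt1; case: n => [|n].
  by rewrite sub0r unitrN1 /gcdz /= gcd1n.
rewrite -natr1 addrK -[n.+1]addn1 PoszD addrK unitZpE // /gcdz /= gcdnC.
by rewrite /coprime; split=> [/eqP -> | [] ->].
Qed.

(* [S] is the vertex set of the base graph of [_ ⊙ K1] and [m u] the pendant vertex
   attached to [u]. *)
Definition pendant_decomposition (T : finType) (H : rel T) (S : {set T}) (m : T -> T) :=
  [/\ {in S, forall u, m u \notin S}, ~: S \subset m @: S &
      {in S, forall u x, H (m u) x = (x == u)}].

Section Components.

Variables (T : finType) (g : rel T).
Hypothesis g_sym : symmetric g.

Definition component (x : T) : {set T} := [set y | connect g x y].

Lemma component_refl x : x \in component x.
Proof. by rewrite inE connect0. Qed.

Lemma adj_component x y : g x y -> y \in component x.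
Proof. by rewrite inE => /connect1. Qed.

Lemma component_eq x y : y \in component x -> component y = component x.
Proof.
rewrite inE => cxy; apply/setP => z; rewrite !inE.
by rewrite (same_connect (sym_connect_sym g_sym) cxy).
Qed.

Lemma components_eq_component C x : C \in components g -> x \in C -> C = component x.
Proof. by case/imsetP=> y _ -> /component_eq ->. Qed.

Lemma component_in_components x : component x \in components g.
Proof. exact: imset_f. Qed.

Lemma components_partition : partition (components g) [set: T].
Proof.
have -> : components g = equivalence_partition (connect g) [set: T].
  apply/setP=> C; apply/imsetP/imsetP=> -[x _ ->]; exists x => //;
  by apply/setP=> y; rewrite !inE.
apply: equivalence_partitionP => x y z _ _ _.
split=> [|cxy]; first exact: connect0.
by rewrite (same_connect (sym_connect_sym g_sym) cxy).
Qed.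

Lemma induced_component C x y : C \in components g -> x \in C ->
  induced g C x y = g x y.
Proof.
move=> compC xC; rewrite /induced xC /=.
case gxy: (g x y); rewrite ?andbF // andbT.
by rewrite (components_eq_component compC xC) adj_component.
Qed.

Lemma card_adj_pairs_forest :
  (forall C, C \in components g -> is_tree_on g C) ->
  (#|[set p : T * T | g p.1 p.2]| + 2 * #|components g| = 2 * #|T|)%N.
Proof.
move=> trees.
have edgesC C : C \in components g ->
    (\sum_(x in C) #|[set y | g x y]| + 2 = 2 * #|C|)%N.
  move=> compC; have [C_gt0 _] := trees C compC.
  rewrite card_rel_pairs (bigID (mem C)) /= [X in (_ + X)%N]big1 => [|x xC].
    rewrite addn0 (eq_bigr (fun x => #|[set y | g x y]|)) => [|x xC]; first lia.
    by apply: eq_card => y; rewrite !inE induced_component.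
  by apply/eqP; rewrite cards_eq0; apply/eqP/setP=> y; rewrite !inE /induced (negbTE xC).
have partT := components_partition.
rewrite card_rel_pairs -cardsT (card_partition partT).
rewrite (eq_bigl (mem [set: T])) => [|x]; last by rewrite /= in_setT.
rewrite (set_partition_big _ partT) /=.
rewrite mulnC -sum_nat_const -big_split big_distrr /=.
by apply: eq_bigr => C compC; rewrite edgesC.
Qed.

Lemma pendant_decomposition_of_components :
  (forall C, C \in components g -> is_corona_K1_on g C) ->
  exists S m, pendant_decomposition g S m.
Proof.
move=> coronas.
have /fin_all_exists[F corF] : forall C, exists p : {set T} * (T -> T),
    C \in components g -> [/\ p.1 \subset C, C :\: p.1 = p.2 @: p.1 &
      {in p.1, forall u x, x \in C -> g (p.2 u) x = (x == u)}].
  move=> C; have [/coronas[S0 [m0 [? _ ? adj]]] | _] := boolP (C \in components g).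
    by exists (S0, m0) => _; split=> // u x uS xC; apply: adj.
  by exists (set0, id).
pose core x := (F (component x)).1; pose m x := (F (component x)).2 x.
have corx x := corF _ (component_in_components x).
have leavesE x : component x :\: core x = (F (component x)).2 @: core x.
  by have [] := corx x.
have core_eq x u : u \in core x -> core u = core x /\ m u = (F (component x)).2 u.
  have [/subsetP core_sub _ _] := corx x.
  by move=> /core_sub/component_eq; rewrite /core /m => ->.
have m_leaf u : u \in core u -> m u \in component u :\: core u.
  by move=> uS; rewrite leavesE; apply: imset_f.
exists [set u | u \in core u], m; split.
- move=> u; rewrite !inE => uS; have := m_leaf u uS; rewrite inE => /andP[].
  by rewrite /core => + /component_eq ->.
- apply/subsetP=> v; rewrite !inE => vS.
  have : v \in component v :\: core v by rewrite inE vS component_refl.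
  rewrite leavesE => /imsetP[u uS ->]; have [core_u m_u] := core_eq v u uS.
  by apply/imsetP; exists u; [rewrite inE core_u | rewrite m_u].
- move=> u; rewrite inE => uS x; have := m_leaf u uS; rewrite inE => /andP[_ m_u].
  have [xC | xC] := boolP (x \in component u).
    by have [_ _ adj] := corx u; apply: adj.
  have -> : (x == u) = false by apply: contraNF xC => /eqP ->; apply: component_refl.
  by apply: contraNF xC => /adj_component; rewrite (component_eq m_u).
Qed.

End Components.

Section PendantDecomposition.

Variables (T : finType) (H : rel T) (S : {set T}) (m : T -> T).
Hypotheses (H_sym : symmetric H) (decH : pendant_decomposition H S m).

(* The unique neighbour of a leaf; junk on the core. *)
Definition support_vertex (v : T) : T := odflt v [pick u | H v u].

Definition core_deg (u : T) : nat := #|[set w in S | H u w]|.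

Lemma leafP v : v \notin S -> exists2 u, u \in S & v = m u.
Proof.
have [_ /subsetP leaves_m _] := decH => vS.
by apply/imsetP/leaves_m; rewrite inE.
Qed.

Lemma support_vertex_leaf u : u \in S -> support_vertex (m u) = u.
Proof.
have [_ _ adj_m] := decH => uS; rewrite /support_vertex.
by case: pickP => [w | /(_ u)]; rewrite adj_m // => /eqP.
Qed.

Lemma support_vertex_in v : v \notin S -> support_vertex v \in S.
Proof. by case/leafP=> u uS ->; rewrite support_vertex_leaf. Qed.

Lemma leaf_support_vertex v : v \notin S -> m (support_vertex v) = v.
Proof. by case/leafP=> u uS ->; rewrite support_vertex_leaf. Qed.

Lemma adj_leaf v x : v \notin S -> H v x = (x == support_vertex v).
Proof.
have [_ _ adj_m] := decH.
by case/leafP=> u uS ->; rewrite support_vertex_leaf // adj_m.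
Qed.

Lemma adj_core_leaf u w : u \in S -> (H u w && (w \notin S)) = (w == m u).
Proof.
have [m_leaf _ adj_m] := decH => uS.
apply/andP/eqP=> [[Huw wS] | ->]; last by rewrite H_sym adj_m ?eqxx ?m_leaf.
by move: Huw; rewrite H_sym adj_leaf // => /eqP ->; rewrite leaf_support_vertex.
Qed.

Lemma sum_adj_core (V : nmodType) (F : T -> V) u : u \in S ->
  \sum_(w | H u w) F w = \sum_(w in S | H u w) F w + F (m u).
Proof.
move=> uS; rewrite (bigID (fun w => w \in S)) /=.
rewrite [X in _ + X](eq_bigl (pred1 (m u))) ?big_pred1_eq => [|w].
  by congr (_ + _); apply: eq_bigl => w; rewrite andbC.
by rewrite /= adj_core_leaf.
Qed.

Lemma sum_adj_leaf (V : nmodType) (F : T -> V) v : v \notin S ->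
  \sum_(w | H v w) F w = F (support_vertex v).
Proof.
move=> vS; rewrite (eq_bigl (pred1 (support_vertex v))) ?big_pred1_eq // => w.
by rewrite adj_leaf.
Qed.

Lemma sum_leaves (V : nmodType) (F : T -> V) :
  \sum_(v | v \notin S) F v = \sum_(u in S) F (m u).
Proof.
have [m_leaf _ _] := decH.
rewrite (reindex_onto m support_vertex) => [|v]; last exact: leaf_support_vertex.
apply: eq_bigl => u; have [uS | uS] := boolP (u \in S).
  by rewrite m_leaf // support_vertex_leaf ?eqxx.
by apply/negbTE; apply: contraNN uS => /andP[/support_vertex_in + /eqP <-].
Qed.

Lemma card_pendant : #|T| = (2 * #|S|)%N.
Proof.
rewrite -(cardsC S) -sum1_card.
have -> : #|~: S| = (\sum_(v | v \notin S) 1)%N.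
  by rewrite -sum1_card; apply: eq_bigl => v; rewrite inE.
by rewrite sum_leaves sum1_card; lia.
Qed.

Lemma card_adj_pairs_pendant :
  #|[set p : T * T | H p.1 p.2]| = (\sum_(u in S) core_deg u + 2 * #|S|)%N.
Proof.
rewrite card_rel_pairs (bigID (fun v => v \in S)) /=.
under eq_bigr => u uS.
  rewrite -sum1_card (eq_bigl (fun w => H u w)) => [|w]; last by rewrite inE.
  rewrite sum_adj_core // sum1_card.
  have -> : #|[pred w in S | H u w]| = core_deg u by apply: eq_card => w; rewrite inE.
  over.
under [X in (_ + X)%N]eq_bigr => v vS.
  rewrite -sum1_card (eq_bigl (fun w => H v w)) => [|w]; last by rewrite inE.
  rewrite sum_adj_leaf //.
  over.
rewrite big_split /= sum_leaves !sum1_card; lia.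
Qed.

(* Core vertices get 1, which settles every leaf; the leaf [m u] then makes up what
   [u] still lacks after its core neighbours. *)
Definition weight (R : pzRingType) (v : T) : R :=
  if v \in S then 1 else 1 - (core_deg (support_vertex v))%:R.

(* The leaf equations give [x] on the core; each core equation then gives [x] at its
   leaf. *)
Definition adj_inv (R : pzRingType) (y : T -> R) (v : T) : R :=
  if v \in S then y (m v)
  else y (support_vertex v) - \sum_(u in S | H (support_vertex v) u) y (m u).

Lemma sum_adj_weight (R : pzRingType) v : \sum_(w | H v w) weight R w = 1.
Proof.
have [m_leaf _ _] := decH.
have [vS | vS] := boolP (v \in S); last first.
  by rewrite sum_adj_leaf // /weight support_vertex_in.
rewrite sum_adj_core // /weight (negbTE (m_leaf v vS)) support_vertex_leaf //.
rewrite (eq_bigr (fun=> 1)) => [|w /andP[-> _] //].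
rewrite sumr_const (eq_card (_ : _ =i [set w in S | H v w])) => [|w]; last by rewrite inE.
by rewrite addrC subrK.
Qed.

Lemma sum_adj_inv (R : pzRingType) (y : T -> R) v :
  \sum_(w | H v w) adj_inv y w = y v.
Proof.
have [m_leaf _ _] := decH.
have [vS | vS] := boolP (v \in S); last first.
  by rewrite sum_adj_leaf // /adj_inv support_vertex_in // leaf_support_vertex.
rewrite sum_adj_core // {2}/adj_inv (negbTE (m_leaf v vS)) support_vertex_leaf //.
rewrite (eq_bigr (fun w => y (m w))) => [|w /andP[wS _]]; last by rewrite /adj_inv wS.
by rewrite addrC subrK.
Qed.

Lemma sum_weight_adj (R : comPzRingType) (x : T -> R) :
  \sum_v weight R v * \sum_(w | H v w) x w = \sum_w x w.
Proof.
under eq_bigr do rewrite mulr_sumr.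
rewrite (exchange_big_dep xpredT) //=; apply: eq_bigr => w _.
by rewrite -mulr_suml (eq_bigl (H w)) ?sum_adj_weight ?mul1r // => v; rewrite H_sym.
Qed.

Lemma sum_weight (R : pzRingType) (c : nat) :
  (\sum_(u in S) core_deg u + 2 * c = 2 * #|S|)%N -> \sum_v weight R v = (2 * c)%:R.
Proof.
move=> deg_sum; rewrite (bigID (fun v => v \in S)) /= sum_leaves.
rewrite (eq_bigr (fun=> 1)) => [|u uS]; last by rewrite /weight uS.
rewrite [X in _ + X](eq_bigr (fun u => 1 - (core_deg u)%:R)) => [|u uS]; last first.
  have [m_leaf _ _] := decH.
  by rewrite /weight (negbTE (m_leaf u uS)) support_vertex_leaf.
rewrite sumrB -natr_sum !sumr_const addrA -natrD addnn -mul2n -deg_sum.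
by rewrite natrD addrC addKr.
Qed.

End PendantDecomposition.

Section LightsOut.

Variables (T : finType) (e : rel T) (S : {set T}) (m : T -> T) (c : nat).
Let H := compl_rel e.
Hypotheses (H_sym : symmetric H) (decH : pendant_decomposition H S m).
Hypothesis deg_sum : (\sum_(u in S) core_deg H S u + 2 * c = 2 * #|S|)%N.

Lemma sum_closed_nbhd_compl (V : zmodType) (x : T -> V) v :
  \sum_(w | closed_nbhd e w v) x w = \sum_w x w - \sum_(w | H v w) x w.
Proof. by rewrite sum_closed_nbhd [X in _ - X](eq_bigl (H v)) // => w; rewrite H_sym. Qed.

Lemma weighted_toggle_sum (R : comPzRingType) (x : T -> R) :
  \sum_v weight H S R v * \sum_(w | closed_nbhd e w v) x w
    = ((2 * c)%:R - 1) * \sum_w x w.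
Proof.
under eq_bigr do rewrite sum_closed_nbhd_compl mulrBr.
rewrite sumrB -mulr_suml (sum_weight decH _ deg_sum) (sum_weight_adj H_sym decH).
by rewrite mulrBl mul1r.
Qed.

Lemma unit_of_lights_out_solvable (R : comUnitRingType) :
  lights_out_solvable R e -> ((2 * c)%:R - 1 : R) \is a GRing.unit.
Proof.
move=> solve; case: (pickP (fun _ : T => true)) => [t _ | T0]; last first.
  by rewrite -(sum_weight decH _ deg_sum) big_pred0 // sub0r unitrN1.
(* The labeling [A_H e_t] has weighted sum 1. *)
have [x hx] := solve (fun v => if H t v then 1 else 0).
have : \sum_v weight H S R v *
    ((if H t v then 1 else 0) + \sum_(w | closed_nbhd e w v) x w) = 0.
  by rewrite big1 // => v _; rewrite hx mulr0.
under eq_bigr do rewrite mulrDr.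
rewrite big_split /= weighted_toggle_sum.
rewrite (eq_bigr (fun v => if H t v then weight H S R v else 0)) => [|v _]; last first.
  by case: ifP; rewrite ?mulr1 ?mulr0.
rewrite -big_mkcond (sum_adj_weight H_sym decH) => /eqP.
rewrite addrC addr_eq0 => /eqP inv.
by apply/unitrPr; exists (- \sum_w x w); rewrite mulrN inv opprK.
Qed.

Lemma lights_out_solvable_of_unit (R : comUnitRingType) :
  ((2 * c)%:R - 1 : R) \is a GRing.unit -> lights_out_solvable R e.
Proof.
move=> unit_2c f.
pose phi := \sum_v weight H S R v * f v.
(* [sigma] is the value [\sum_w x w] must take. *)
pose sigma := - phi / ((2 * c)%:R - 1).
have sigmaE : ((2 * c)%:R - 1) * sigma = - phi by rewrite mulrC divrK.
exists (adj_inv H S m (fun v => sigma + f v)) => v.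
have sum_x : \sum_w adj_inv H S m (fun v => sigma + f v) w = (2 * c)%:R * sigma + phi.
  rewrite -(sum_weight_adj H_sym decH).
  under eq_bigr do rewrite (sum_adj_inv H_sym decH) mulrDr.
  by rewrite big_split -mulr_suml (sum_weight decH _ deg_sum).
rewrite sum_closed_nbhd_compl (sum_adj_inv H_sym decH) sum_x.
by rewrite -[RHS](addNr phi) -sigmaE; ring.
Qed.

Lemma lights_out_solvableP (R : comUnitRingType) :
  lights_out_solvable R e <-> ((2 * c)%:R - 1 : R) \is a GRing.unit.
Proof.
by split; [exact: unit_of_lights_out_solvable | exact: lights_out_solvable_of_unit].
Qed.

End LightsOut.

Local Close Scope ring_scope.

Theorem corollary3p11 (T : finType) (e : rel T) (l : nat) :
  simple_graph e -> (2 <= l)%N ->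
  (forall C, C \in components (compl_rel e) -> is_pendant_tree (compl_rel e) C) ->
  N_AW e l <->
  gcdz ((2 * #|components (compl_rel e)|)%:Z - 1)%R l%:Z = 1.
Proof.
move=> [e_sym _] l_gt1 pendant_trees.
have H_sym : symmetric (compl_rel e) by move=> x y; rewrite /compl_rel eq_sym e_sym.
have [S [m decH]] := pendant_decomposition_of_components H_sym
  (fun C compC => (pendant_trees C compC).2).
have deg_sum : \sum_(u in S) core_deg (compl_rel e) S u + 2 * #|components (compl_rel e)|
    = 2 * #|S|.
  have := card_adj_pairs_forest H_sym (fun C compC => (pendant_trees C compC).1).
  by rewrite (card_adj_pairs_pendant H_sym decH) (card_pendant decH); lia.
rewrite N_AW_lights_out_solvable (lights_out_solvableP H_sym decH deg_sum).
exact: unitZp_natr_sub1.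
Qed.
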